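(* Let $q\ge5$. The imaginary chords of the twisted cubic $\mathcal{C}$ form one orbit under $G_q$, and the subgroup of $G_q$ fixing an imaginary chord has size $2(q+1)$. For $q$ odd, let $\rho$ be a non-square in $\mathbb{F}_q$; the line $\ell_1$ through $P(1,0,\rho,0)$ and $P(0,1,0,\rho)$ is an imaginary chord, and every element of the subgroup of $G_q$ fixing $\ell_1$ has a matrix of the form $\begin{pmatrix}\alpha d^3&\alpha\rho bd^2&\alpha\rho^2b^2d&\alpha\rho^3b^3\\ 3bd^2&d^3+2\rho b^2d&\rho^2b^3+2\rho bd^2&3\rho^2b^2d\\ 3\alpha b^2d&\alpha\rho b^3+2\alpha bd^2&\alpha d^3+2\alpha\rho b^2d&3\alpha\rho bd^2\\ b^3&b^2d&bd^2&d^3\end{pmatrix}$, with $\alpha\in\{-1,1\}$ and $b,d\in\mathbb{F}_q$ not both $0$. For $q$ even, let $\eta\in\mathbb{F}_q$ have absolute trace $1$; the line $\ell_2$ through $P(\eta+1,1,1,0)$ and $P(\eta,\eta,0,1)$ is an imaginary chord, and every element of the subgroup of $G_q$ fixing $\ell_2$ has a matrix of the form $\begin{pmatrix}A^3&cA^2&c^2A&c^3\\ A^2B&dA^2&c^2B&c^2d\\ AB^2&cB^2&Ad^2&cd^2\\ B^3&dB^2&d^2B&d^3\end{pmatrix}$, where $A=\alpha c+d$, $B=\eta c+(\alpha+1)d$, $\alpha\in\{0,1\}$, and $c,d\in\mathbb{F}_q$ not both $0$.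
   Context: $\mathrm{PG}(3,q)$ has points $P(x_0,x_1,x_2,x_3)$. For $t\in\mathbb{F}_{q^2}$ let $P_t=P(t^3,t^2,t,1)$, and $P_\infty=P(1,0,0,0)$; the twisted cubic is $\mathcal{C}=\{P_t:t\in\mathbb{F}_q\cup\{\infty\}\}$. An imaginary chord is a line of $\mathrm{PG}(3,q)$ which, extended to $\mathrm{PG}(3,q^2)$, passes through $P_t$ and $P_{t^q}$ for some $t\in\mathbb{F}_{q^2}\setminus\mathbb{F}_q$. $G_q$ is the group of projectivities of $\mathrm{PG}(3,q)$ mapping $\mathcal{C}$ to itself; for $q\ge5$ its elements are the maps $x\mapsto xM$ on row coordinate vectors, with $M=\begin{pmatrix} a^3&a^2c&ac^2&c^3\\ 3a^2b&a^2d+2abc&bc^2+2acd&3c^2d\\ 3ab^2&b^2c+2abd&ad^2+2bcd&3cd^2\\ b^3&b^2d&bd^2&d^3\end{pmatrix}$, $a,b,c,d\in\mathbb{F}_q$, $ad-bc\neq0$, up to a nonzero scalar. For $q=2^h$, the absolute trace of $\eta$ is $\eta+\eta^2+\eta^{4}+\dots+\eta^{2^{h-1}}$. *)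

From HB Require Import structures.
From mathcomp Require Import all_boot all_order all_algebra all_fingroup all_field.
Set Implicit Arguments. Unset Strict Implicit. Unset Printing Implicit Defensive.
Import Order.TTheory GRing.Theory.
Local Open Scope ring_scope.

Section TwistedCubic.
Variable F : finFieldType.

Definition mx4 (s : seq (seq F)) : 'M[F]_4 :=
  \matrix_(i < 4, j < 4) nth 0 (nth [::] s i) j.

Definition line2 (u v : seq F) : 'M[F]_(2,4) :=
  \matrix_(i < 2, j < 4) nth 0 (nth [::] [:: u; v] i) j.

(* The matrix M(a,b,c,d) of the context (action x |-> x M on row vectors). *)
Definition Mabcd (a b c d : F) : 'M[F]_4 := mx4
  [:: [:: a^+3; a^+2 * c; a * c^+2; c^+3];
      [:: 3%:R * a^+2 * b; a^+2 * d + 2%:R * a * b * c;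
          b * c^+2 + 2%:R * a * c * d; 3%:R * c^+2 * d];
      [:: 3%:R * a * b^+2; b^+2 * c + 2%:R * a * b * d;
          a * d^+2 + 2%:R * b * c * d; 3%:R * c * d^+2];
      [:: b^+3; b^+2 * d; b * d^+2; d^+3] ].

(* A projectivity = class of a matrix modulo nonzero scalars. *)
Definition pclass (M : 'M[F]_4) : {set 'M[F]_4} :=
  [set N : 'M[F]_4 | [exists k : F, (k != 0) && (N == k *: M)]].

(* The group G_q of projectivities preserving the twisted cubic (q >= 5). *)
Definition Gq : {set {set 'M[F]_4}} :=
  [set C : {set 'M[F]_4} | [exists a : F, exists b : F, exists c : F, exists d : F,
     (a * d - b * c != 0) && (C == pclass (Mabcd a b c d))]].

Definition stab (L : 'M[F]_(2,4)) : {set {set 'M[F]_4}} :=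
  [set C in Gq | [exists M in C, (L *m M == L)%MS]].

Definition Pt (K : fieldType) (t : K) : 'rV[K]_4 := \row_(j < 4) t ^+ (3 - j).

(* F_{q^2} is realised as any
   finite field K with q^2 elements together with an embedding of F. *)
Definition imag_chord (L : 'M[F]_(2,4)) : Prop :=
  \rank L = 2%N /\
  exists (K : finFieldType) (iota : {rmorphism F -> K}),
    #|K| = (#|F| ^ 2)%N /\
    exists t : K, (forall x : F, iota x != t) /\
      (Pt t <= map_mx iota L)%MS /\ (Pt (t ^+ #|F|) <= map_mx iota L)%MS.

Definition ell1 (rho : F) : 'M[F]_(2,4) := line2 [:: 1; 0; rho; 0] [:: 0; 1; 0; rho].

Definition Mform1 (rho al b d : F) : 'M[F]_4 := mx4
  [:: [:: al * d^+3; al * rho * b * d^+2; al * rho^+2 * b^+2 * d; al * rho^+3 * b^+3];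
      [:: 3%:R * b * d^+2; d^+3 + 2%:R * rho * b^+2 * d;
          rho^+2 * b^+3 + 2%:R * rho * b * d^+2; 3%:R * rho^+2 * b^+2 * d];
      [:: 3%:R * al * b^+2 * d; al * rho * b^+3 + 2%:R * al * b * d^+2;
          al * d^+3 + 2%:R * al * rho * b^+2 * d; 3%:R * al * rho * b * d^+2];
      [:: b^+3; b^+2 * d; b * d^+2; d^+3] ].

Definition abs_trace (eta : F) : F := \sum_(i < logn 2 #|F|) eta ^+ (2 ^ i).

Definition ell2 (eta : F) : 'M[F]_(2,4) := line2 [:: eta + 1; 1; 1; 0] [:: eta; eta; 0; 1].

Definition Mform2 (eta al c d : F) : 'M[F]_4 :=
  let A := al * c + d in
  let B := eta * c + (al + 1) * d in
  mx4
  [:: [:: A^+3; c * A^+2; c^+2 * A; c^+3];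
      [:: A^+2 * B; d * A^+2; c^+2 * B; c^+2 * d];
      [:: A * B^+2; c * B^+2; A * d^+2; c * d^+2];
      [:: B^+3; d * B^+2; d^+2 * B; d^+3] ].

End TwistedCubic.

From HB Require Import structures.
From mathcomp Require Import all_boot all_order all_algebra all_fingroup all_field.
From mathcomp Require Import ring.
Import Order.TTheory GRing.Theory.
Local Open Scope ring_scope.
Set Implicit Arguments. Unset Strict Implicit. Unset Printing Implicit Defensive.

(* An imaginary chord L meets the twisted cubic over F_(q^2) in conjugate points P_t and
   P_(t^q), where t^2 = v t + u with v, u in F_q; then t^q = v - t and L is the line
   chord_mx v u through P_t and P_(v - t).  The projectivity M(a,b,c,d) maps P_s to
   P_((a s + b) / (c s + d)), so G_q permutes the imaginary chords; it is transitive on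
   them because the quadratic of any other imaginary chord has a root s = a t + b in
   F_(q^2), and M(a,b,0,1) sends P_t to P_s.  An element of G_q stabilises chord_mx v u
   iff its Moebius map sends t to t or to v - t; comparing coefficients in the basis
   {t, 1} of F_(q^2) over F_q gives two families of q + 1 projectivities, indexed by the
   points (a : c) of PG(1,q).  The normal forms for l1 and l2 are these families for
   (v, u) = (0, 1/rho) and (1, eta); X^2 + X + eta is irreducible since eta has absolute
   trace 1. *)

Notation o0 := (@Ordinal 4 0 isT).
Notation o1 := (@Ordinal 4 1 isT).
Notation o2 := (@Ordinal 4 2 isT).
Notation o3 := (@Ordinal 4 3 isT).

Ltac case_ord i := case: i => [[|[|[|[|?]]]] ?] //=.

(** * Chords and the projectivities M(a,b,c,d) *)

Section Chord.
Variable K : fieldType.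
Implicit Types v u s t : K.

(* The line through P_s and P_(v - s), for s and v - s the roots of X^2 - vX - u:
   indeed P_s = s * (row 0) + (row 1). *)
Definition chord_mx v u : 'M[K]_(2,4) :=
  \matrix_(i < 2, j < 4) nth 0 (nth [::] [:: [:: v^+2 + u; v; 1; 0]; [:: u * v; u; 0; 1]] i) j.

Lemma sub_chord_mx v u (w : 'rV[K]_4) :
  (w <= chord_mx v u)%MS =
  (w 0 o0 == (v^+2 + u) * w 0 o2 + u * v * w 0 o3) && (w 0 o1 == v * w 0 o2 + u * w 0 o3).
Proof.
apply/submxP/andP => [[D ->] | [/eqP w0 /eqP w1]].
  by rewrite !mxE !big_ord_recl !big_ord0 !mxE /=; split; apply/eqP; ring.
exists (\row_(i < 2) nth 0 [:: w 0 o2; w 0 o3] i).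
apply/matrixP => i j; rewrite ord1 !mxE !big_ord_recl !big_ord0 !mxE /=.
by case: j => [[|[|[|[|j]]]] Hj] //=; rewrite (bool_irrelevance Hj isT) ?w0 ?w1; ring.
Qed.

Lemma mxrank_chord_mx v u : \rank (chord_mx v u) = 2%N.
Proof.
apply/eqP; rewrite eqn_leq rank_leq_row /=.
pose P : 'M[K]_(4,2) := \matrix_(i < 4, j < 2) (i == (j + 2)%N :> nat)%:R.
have PK : chord_mx v u *m P = 1%:M.
  apply/matrixP => i j; rewrite !mxE !big_ord_recl !big_ord0 !mxE /=.
  by case_ord i; case_ord j; ring.
by have := mxrankM_maxl (chord_mx v u) P; rewrite PK mxrank1.
Qed.

Lemma Pt_sub_chord_mx v u s : (Pt s <= chord_mx v u)%MS = (s ^+ 2 == v * s + u).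
Proof.
rewrite sub_chord_mx !mxE /= expr1 expr0 !mulr1.
have cubic : s ^+ 3 - ((v ^+ 2 + u) * s + u * v) = (s + v) * (s ^+ 2 - (v * s + u)) by ring.
apply/andP/idP => [[_ ->] // | /eqP s2]; split; apply/eqP => //.
by apply/subr0_eq; rewrite cubic s2 subrr mulr0.
Qed.

Lemma quad_root_cases v u s t :
  t ^+ 2 = v * t + u -> s ^+ 2 = v * s + u -> s = t \/ s = v - t.
Proof.
move=> t2 s2.
have : (s - t) * (s - (v - t)) = s ^+ 2 - (v * s + u) - (t ^+ 2 - (v * t + u)) by ring.
by rewrite -s2 -t2 !subrr => /eqP; rewrite mulf_eq0 !subr_eq0 => /orP [] /eqP; [left | right].
Qed.

Lemma chord_mx_sub v u t (M : 'M[K]_(2,4)) : t ^+ 2 = v * t + u -> t != v - t ->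
  (Pt t <= M)%MS -> (Pt (v - t) <= M)%MS -> (chord_mx v u <= M)%MS.
Proof.
move=> t2 tt' Mt Mt'; have dt : t - (v - t) != 0 by rewrite subr_eq0.
have -> : u = t ^+ 2 - v * t by rewrite t2; ring.
apply/row_subP => i; have [al [be ->]] : exists al be,
    row i (chord_mx v (t ^+ 2 - v * t)) = al *: Pt t + be *: Pt (v - t).
  case: i => [[|[|i]] Hi] //; [exists (t - (v - t))^-1, (- (t - (v - t))^-1) |
    exists (- (v - t) / (t - (v - t))), (t / (t - (v - t)))];
  by apply/matrixP => i j; rewrite ord1 !mxE /=; case_ord j; field.
by rewrite addmx_sub ?scalemx_sub.
Qed.

End Chord.

Lemma map_chord_mx (K L : fieldType) (f : {rmorphism K -> L}) (v u : K) :
  map_mx f (chord_mx v u) = chord_mx (f v) (f u).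
Proof.
apply/matrixP => i j; rewrite !mxE.
by case_ord i; case_ord j; rewrite ?rmorphD ?rmorphM ?rmorphXn ?rmorph1 ?rmorph0.
Qed.

Section TwistedCubicMaps.
Variable K : finFieldType.
Implicit Types a b c d s P R : K.

(* The point P(P^3, P^2 R, P R^2, R^3), that is P_(P/R) in homogeneous form. *)
Definition Pt_hom P R : 'rV[K]_4 := \row_(j < 4) nth 0 [:: P^+3; P^+2 * R; P * R^+2; R^+3] j.

Lemma Pt_mul_Mabcd a b c d s : Pt s *m Mabcd a b c d = Pt_hom (a * s + b) (c * s + d).
Proof.
apply/rowP => j; rewrite !mxE !big_ord_recl !big_ord0 !mxE /=.
by case_ord j; ring.
Qed.

Lemma Pt_homE P R : R != 0 -> Pt_hom P R = R ^+ 3 *: Pt (P / R).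
Proof. by move=> R0; apply/rowP => j; rewrite !mxE /=; case_ord j; field. Qed.

Lemma Pt_scale_inj k k' s s' : k != 0 -> k *: Pt s = k' *: Pt s' -> s = s'.
Proof.
move=> k0 E; have := congr1 (fun w : 'rV_4 => w 0 o3) E.
have := congr1 (fun w : 'rV_4 => w 0 o2) E.
by rewrite !mxE /= !expr1 !expr0 !mulr1 => e2 e3; apply: (mulfI k0); rewrite e2 -e3.
Qed.

Lemma Mabcd_scale l a b c d :
  Mabcd (l * a) (l * b) (l * c) (l * d) = l ^+ 3 *: Mabcd a b c d.
Proof. by apply/matrixP => i j; rewrite !mxE; case_ord i; case_ord j; ring. Qed.

Lemma Mabcd_mul_adj a b c d :
  Mabcd a b c d *m Mabcd d (- b) (- c) a = (a * d - b * c) ^+ 3 *: 1%:M.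
Proof.
apply/matrixP => i j; rewrite !mxE !big_ord_recl !big_ord0 !mxE /=.
by case_ord i; case_ord j; ring.
Qed.

Lemma Mabcd_unit a b c d : a * d - b * c != 0 -> Mabcd a b c d \in unitmx.
Proof.
move=> det0.
have := @mulmx1_unit _ _ (Mabcd a b c d) (((a * d - b * c) ^+ 3)^-1 *: Mabcd d (- b) (- c) a).
by rewrite -scalemxAr Mabcd_mul_adj scalerA mulVf ?scale1r ?expf_neq0 // => -[].
Qed.

Lemma det_neq0_cd a b c d : a * d - b * c != 0 -> (c != 0) || (d != 0).
Proof.
by apply: contraR; rewrite negb_or !negbK => /andP [/eqP -> /eqP ->]; rewrite !mulr0 subrr.
Qed.

Lemma Pt_sub_mul_Mabcd m (X : 'M[K]_(m,4)) a b c d s : c * s + d != 0 ->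
  (Pt s <= X)%MS -> (Pt ((a * s + b) / (c * s + d)) <= X *m Mabcd a b c d)%MS.
Proof.
move=> R0 Xs; have : (Pt s *m Mabcd a b c d <= X *m Mabcd a b c d)%MS by exact: submxMr.
by rewrite Pt_mul_Mabcd Pt_homE // eqmx_scale // expf_neq0.
Qed.

End TwistedCubicMaps.

Lemma map_Mabcd (F K : finFieldType) (f : {rmorphism F -> K}) a b c d :
  map_mx f (Mabcd a b c d) = Mabcd (f a) (f b) (f c) (f d).
Proof.
apply/matrixP => i j; rewrite !mxE.
by case_ord i; case_ord j; rewrite ?rmorphD ?rmorphM ?rmorphXn ?rmorph_nat.
Qed.

Section Projectivities.
Variable F : finFieldType.
Implicit Types (M N : 'M[F]_4) (C : {set 'M[F]_4}).

Lemma pclassP M N : reflect (exists2 k, k != 0 & M = k *: N) (M \in pclass N).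
Proof.
rewrite inE; apply: (iffP existsP) => [[k /andP [k0 /eqP ->]] | [k k0 ->]]; first by exists k.
by exists k; rewrite k0 eqxx.
Qed.

Lemma pclass_id N : N \in pclass N.
Proof. by apply/pclassP; exists 1; rewrite ?oner_eq0 ?scale1r. Qed.

Lemma pclass_scale k N : k != 0 -> pclass (k *: N) = pclass N.
Proof.
move=> k0; apply/setP => M; apply/pclassP/pclassP => [[l l0 ->] | [l l0 ->]].
  by exists (l * k); rewrite ?mulf_neq0 // scalerA.
by exists (l / k); rewrite ?mulf_neq0 ?invr_eq0 // scalerA divfK.
Qed.

Lemma pclass_of_mem M N : M \in pclass N -> pclass M = pclass N.
Proof. by case/pclassP => k k0 ->; rewrite pclass_scale. Qed.

Lemma GqP C :
  reflect (exists a b c d, a * d - b * c != 0 /\ C = pclass (Mabcd a b c d)) (C \in Gq F).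
Proof.
rewrite inE; apply: (iffP existsP) => [[a /existsP [b /existsP [c /existsP [d]]]] | ].
  by case/andP => det0 /eqP ->; exists a, b, c, d.
move=> [a [b [c [d [det0 ->]]]]]; exists a; apply/existsP; exists b.
by apply/existsP; exists c; apply/existsP; exists d; rewrite det0 eqxx.
Qed.

Lemma pclass_Mabcd_Gq a b c d : a * d - b * c != 0 -> pclass (Mabcd a b c d) \in Gq F.
Proof. by move=> det0; apply/GqP; exists a, b, c, d. Qed.

Lemma Gq_pclass C M : C \in Gq F -> M \in C -> C = pclass M.
Proof. by case/GqP => [a [b [c [d [_ ->]]]]] /pclass_of_mem ->. Qed.

Lemma stabP L C :
  reflect (C \in Gq F /\ exists2 M, M \in C & (L *m M == L)%MS) (C \in stab L).
Proof.
rewrite [X in reflect _ X]inE.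
apply: (iffP andP) => [[-> /existsP [M /andP [MC LM]]] | [-> [M MC LM]]].
  by split => //; exists M.
by split => //; apply/existsP; exists M; rewrite MC.
Qed.

End Projectivities.

(** * The quadratic extension F_(q^2) *)

Section QuadraticExtension.
Variables (F K : finFieldType) (iota : {rmorphism F -> K}).
Local Notation q := #|F|.

Lemma pchar_nat_card : [pchar K].-nat q.
Proof.
have [p _ pF] := finPcharP F.
rewrite (card_pprimeChar pF) pnatX (eq_pnat _ (pcharf_eq (rmorph_pchar iota pF))).
by rewrite pnat_id ?(pcharf_prime pF).
Qed.

Lemma frobenius_iota a : iota a ^+ q = iota a.
Proof. by rewrite -rmorphXn expf_card. Qed.

Lemma frobenius_affine a b (s : K) : (iota a * s + iota b) ^+ q = iota a * s ^+ q + iota b.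
Proof. by rewrite (exprDn_pchar _ _ pchar_nat_card) exprMn !frobenius_iota. Qed.

Variable t : K.
Hypothesis t_notin : forall x, iota x != t.

Lemma affine_eq0 a b : iota a * t + iota b = 0 -> a = 0 /\ b = 0.
Proof.
move=> E; have [a0 | a0] := eqVneq a 0.
  by move: E; rewrite a0 rmorph0 mul0r add0r => /eqP; rewrite fmorph_eq0 => /eqP.
have Eat : iota a * t = - iota b by apply/eqP; rewrite -addr_eq0 E.
have := t_notin (- b / a).
by rewrite fmorph_div rmorphN -Eat [iota a * t]mulrC mulfK ?fmorph_eq0 // eqxx.
Qed.

Lemma affine_neq0 c d : (c != 0) || (d != 0) -> iota c * t + iota d != 0.
Proof. by move=> cd; apply/eqP => /affine_eq0 [c0 d0]; move: cd; rewrite c0 d0 eqxx. Qed.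

Lemma frobenius_neq : t ^+ q != t.
Proof.
(* Otherwise t and the q elements of F would be q + 1 roots of X^q - X. *)
apply/eqP => tq; pose p : {poly K} := 'X^q - 'X.
have q1 : (1 < q)%N := finNzRing_gt1 F.
have szp : size p = q.+1 by rewrite size_polyDl size_polyXn // size_polyN size_polyX.
have : (size (t :: map iota (enum F)) < size p)%N.
  apply: max_poly_roots; first by rewrite -size_poly_eq0 szp.
    rewrite /= {1}/root !hornerE tq subrr eqxx /=.
    by apply/allP => y /mapP [x _ ->]; rewrite /root !hornerE frobenius_iota subrr.
  rewrite cons_uniq map_inj_uniq ?enum_uniq ?andbT; last exact: fmorph_inj.
  by apply/mapP => -[x _ /esym/eqP]; rewrite (negbTE (t_notin x)).
by rewrite szp /= size_map -cardE ltnn.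
Qed.

Lemma quad_no_root v u : t ^+ 2 = iota v * t + iota u -> forall x : F, x ^+ 2 != v * x + u.
Proof.
move=> t2 x; apply/eqP => /(congr1 iota); rewrite rmorphXn rmorphD rmorphM => x2.
case: (quad_root_cases t2 x2) => xt; first by have := t_notin x; rewrite xt eqxx.
by have := t_notin (v - x); rewrite rmorphB xt opprB addrC subrK eqxx.
Qed.

Lemma frobenius_quad v u : t ^+ 2 = iota v * t + iota u -> t ^+ q = iota v - t.
Proof.
move=> t2; have tq2 : (t ^+ q) ^+ 2 = iota v * t ^+ q + iota u.
  by rewrite exprAC t2 frobenius_affine.
by case: (quad_root_cases t2 tq2) => // tq; have := frobenius_neq; rewrite tq eqxx.
Qed.

Hypothesis cardK : #|K| = (q ^ 2)%N.

Lemma affine_onto s : exists a b, s = iota a * t + iota b.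
Proof.
pose f (ab : F * F) := iota ab.1 * t + iota ab.2.
have f_inj : injective f.
  move=> [a b] [a' b'] /eqP; rewrite -subr_eq0 /f /= => /eqP E.
  have [/eqP + /eqP] : a - a' = 0 /\ b - b' = 0.
    by apply: affine_eq0; rewrite -E !rmorphB; ring.
  by rewrite !subr_eq0 => /eqP -> /eqP ->.
have : s \in codom f by apply: inj_card_onto => //; rewrite card_prod cardK expnS expn1.
by case/codomP => [[a b] ->]; exists a, b.
Qed.

Lemma frobenius_notin x : iota x != t ^+ q.
Proof.
apply/eqP => E; have := t_notin x; rewrite -[t]expf_card cardK expnS expn1 exprM -E.
by rewrite frobenius_iota eqxx.
Qed.

End QuadraticExtension.

Section QuadPoly.
Variable F : fieldType.
Implicit Types v u : F.

Definition quad v u : {poly F} := 'X^2 - (v%:P * 'X + u%:P).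

Lemma size_linear_poly v u : (size (v%:P * 'X + u%:P)%R <= 2)%N.
Proof. by rewrite size_MXaddC; case: ifP => // _; rewrite ltnS size_polyC_leq1. Qed.

Lemma size_quad v u : size (quad v u) = 3%N.
Proof. by rewrite size_polyDl size_polyXn // size_polyN ltnS size_linear_poly. Qed.

Lemma monic_quad v u : quad v u \is monic.
Proof.
by rewrite monicE lead_coefDl ?lead_coefXn // size_polyXn size_polyN ltnS size_linear_poly.
Qed.

Lemma horner_map_quad (K : fieldType) (f : {rmorphism F -> K}) v u (s : K) :
  (map_poly f (quad v u)).[s] = s ^+ 2 - (f v * s + f u).
Proof. by rewrite !(rmorphB, rmorphD, rmorphM) /= map_polyX !map_polyC !hornerE expr2. Qed.

Lemma quad_irreducible v u : (forall x, x ^+ 2 != v * x + u) ->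
  monic_irreducible_poly (quad v u).
Proof.
move=> irr; split; last exact: monic_quad.
apply: cubic_irreducible; first by rewrite size_quad.
by move=> x; rewrite /root !hornerE subr_eq0.
Qed.

End QuadPoly.

Lemma quad_root_notin (F K : finFieldType) (iota : {rmorphism F -> K}) v u (s : K) :
  (forall x, x ^+ 2 != v * x + u) -> s ^+ 2 = iota v * s + iota u -> forall x, iota x != s.
Proof.
move=> irr s2 x; apply: contraNneq (irr x) => xs; apply/eqP/(fmorph_inj iota).
by rewrite rmorphXn rmorphD rmorphM xs.
Qed.

Section QuadExtField.
Variables (F : finFieldType) (v u : F).
Hypothesis irr : forall x : F, x ^+ 2 != v * x + u.

Let quad_mi := quad_irreducible irr.
Local Notation KQ := {poly %/ quad v u with quad_mi}.

Definition quad_ext_const : F -> KQ := qpolyC (quad v u).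
HB.instance Definition _ := GRing.isZmodMorphism.Build F KQ quad_ext_const
  (qpolyC_is_zmod_morphism (quad v u)).
HB.instance Definition _ := GRing.isMonoidMorphism.Build F KQ quad_ext_const
  (qpolyC_is_monoid_morphism (quad v u)).

Lemma quad_ext_root : ('qX : KQ) ^+ 2 = quad_ext_const v * 'qX + quad_ext_const u.
Proof.
apply/eqP; rewrite -subr_eq0 -(horner_map_quad quad_ext_const); apply/eqP.
have := in_qpoly_comp_horner (quad v u) (quad v u) 'X; rewrite comp_polyXr => <-.
apply: val_inj => /=; rewrite (mk_monicE quad_mi).
exact/Pdiv.RingMonic.rmodpp/monic_quad.
Qed.

Lemma exists_quad_ext : exists (K : finFieldType) (iota : {rmorphism F -> K}) (t : K),
  [/\ #|K| = (#|F| ^ 2)%N, forall x, iota x != t & t ^+ 2 = iota v * t + iota u].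
Proof.
exists KQ, quad_ext_const, 'qX; split; last exact: quad_ext_root.
  by rewrite card_qfpoly size_quad.
exact: quad_root_notin irr quad_ext_root.
Qed.

End QuadExtField.

Lemma dvdp_genPoly_root (K : finFieldType) (p : {poly K}) :
  (1 < size p)%N -> p %| 'X^#|K| - 'X -> exists x, root p x.
Proof.
rewrite finField_genPoly => p1 /dvdp_prod_XsubC [m pm].
move: (eqp_size pm) (eqp_root pm); rewrite size_prod_XsubC.
case: (mask m _) => [|x s] /=; first by move=> p_1; rewrite p_1 in p1.
by move=> _ rp; exists x; rewrite rp root_prod_XsubC mem_head.
Qed.

Section QuadSplits.
Variable F : finFieldType.
Local Notation q := #|F|.

Lemma quad_dvdp_Xq2 (K : finFieldType) (iota : {rmorphism F -> K}) v u (t : K) :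
  #|K| = (q ^ 2)%N -> (forall x, iota x != t) -> t ^+ 2 = iota v * t + iota u ->
  quad v u %| 'X^(q ^ 2) - 'X.
Proof.
(* The remainder of X^(q^2) - X modulo the quadratic has degree < 2 and vanishes at t. *)
move=> cK tF t2; set g : {poly F} := 'X^(q ^ 2) - 'X.
have r2 : (size (g %% quad v u)%R <= 2)%N.
  by rewrite -ltnS -(size_quad v u) ltn_modp -size_poly_eq0 size_quad.
have : (map_poly iota (g %% quad v u)).[t] = 0.
  have gt : (map_poly iota g).[t] = 0.
    by rewrite rmorphB /= map_polyXn map_polyX !hornerE -cK expf_card subrr.
  move: gt; rewrite {1}(divp_eq g (quad v u)) rmorphD rmorphM /= hornerD hornerM.
  by rewrite horner_map_quad t2 subrr mulr0 add0r.
rewrite (horner_coef_wide _ (_ : size _ <= 2)%N) ?size_map_poly //.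
rewrite !big_ord_recl big_ord0 !coef_map /= expr0 expr1 mulr1 addr0 addrC.
move=> /(affine_eq0 tF) [r1 r0]; apply/modp_eq0P/polyP => -[|[|i]]; rewrite ?coef0 //.
by rewrite nth_default // (leq_trans r2).
Qed.

Lemma exists_quad_root (K K' : finFieldType) (iota : {rmorphism F -> K})
    (iota' : {rmorphism F -> K'}) v u (t' : K') :
  #|K| = (q ^ 2)%N -> #|K'| = (q ^ 2)%N -> (forall x, iota' x != t') ->
  t' ^+ 2 = iota' v * t' + iota' u -> exists s : K, s ^+ 2 = iota v * s + iota u.
Proof.
move=> cK cK' tF' t2'; have [s] : exists s, root (map_poly iota (quad v u)) s.
  apply: dvdp_genPoly_root; first by rewrite size_map_poly size_quad.
  have -> : 'X^#|K| - 'X = map_poly iota ('X^(q ^ 2) - 'X).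
    by rewrite rmorphB /= map_polyXn map_polyX cK.
  by rewrite dvdp_map (quad_dvdp_Xq2 cK' tF' t2').
by rewrite /root horner_map_quad subr_eq0 => /eqP; exists s.
Qed.

End QuadSplits.

(** * Imaginary chords form one orbit *)

Section ImaginaryChord.
Variable F : finFieldType.
Local Notation q := #|F|.

Definition chord_witness (K : finFieldType) (iota : {rmorphism F -> K}) (L : 'M[F]_(2,4))
    (t : K) :=
  [/\ #|K| = (q ^ 2)%N, forall x, iota x != t, (Pt t <= map_mx iota L)%MS,
      (Pt (t ^+ q) <= map_mx iota L)%MS & \rank L = 2%N].

Lemma imag_chordP L :
  imag_chord L <->
  exists (K : finFieldType) (iota : {rmorphism F -> K}) t, chord_witness iota L t.
Proof.
split => [[rL [K [iota [cK [t [tF [Lt Ltq]]]]]]] | [K [iota [t [cK tF Lt Ltq rL]]]]].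
  by exists K, iota, t.
by split => //; exists K, iota; split => //; exists t.
Qed.

Variables (K : finFieldType) (iota : {rmorphism F -> K}).
Implicit Types (L : 'M[F]_(2,4)) (t : K).

Lemma witness_quad L t : chord_witness iota L t -> exists v u, t ^+ 2 = iota v * t + iota u.
Proof. by case=> cK tF _ _ _; have [v [u ->]] := affine_onto tF cK (t ^+ 2); exists v, u. Qed.

Lemma witness_chord L t v u : chord_witness iota L t -> t ^+ 2 = iota v * t + iota u ->
  (chord_mx v u == L)%MS.
Proof.
case=> cK tF Lt Ltq rL t2; have tq := frobenius_quad tF t2.
have sub : (chord_mx v u <= L)%MS.
  rewrite -(map_submx iota) map_chord_mx (chord_mx_sub t2) -?tq // eq_sym.
  exact: frobenius_neq.
by rewrite -(eq_leqif (mxrank_leqif_eq sub)) mxrank_chord_mx rL.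
Qed.

Lemma chord_mx_witness t v u : #|K| = (q ^ 2)%N -> (forall x, iota x != t) ->
  t ^+ 2 = iota v * t + iota u -> chord_witness iota (chord_mx v u) t.
Proof.
move=> cK tF t2; split; rewrite ?map_chord_mx ?Pt_sub_chord_mx ?mxrank_chord_mx //.
  exact/eqP.
by rewrite exprAC t2 frobenius_affine.
Qed.

Lemma witness_eqmx L L' t : (L == L')%MS -> chord_witness iota L t -> chord_witness iota L' t.
Proof.
move=> LL' [cK tF Lt Ltq rL]; have sub : (map_mx iota L <= map_mx iota L')%MS.
  by rewrite map_submx; case/andP: LL'.
split => //; first exact: submx_trans Lt sub; first exact: submx_trans Ltq sub.
by rewrite -(eqmx_rank LL').
Qed.

Lemma witness_mul_Mabcd L t a b c d : chord_witness iota L t -> a * d - b * c != 0 ->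
  chord_witness iota (L *m Mabcd a b c d) ((iota a * t + iota b) / (iota c * t + iota d)).
Proof.
case=> cK tF Lt Ltq rL det0; have cd := det_neq0_cd det0.
have tqF := frobenius_notin tF cK.
split => //.
- move=> y; apply/eqP => E.
  have [/eqP + /eqP] : a - y * c = 0 /\ b - y * d = 0.
    apply: (affine_eq0 tF); rewrite !rmorphB !rmorphM E; field.
    by have := affine_neq0 tF cd.
  rewrite !subr_eq0 => /eqP ea /eqP eb; move: det0; rewrite ea eb.
  by rewrite (_ : _ - _ = 0) ?eqxx //; ring.
- by rewrite map_mxM map_Mabcd Pt_sub_mul_Mabcd ?(affine_neq0 tF).
- rewrite expr_div_n !frobenius_affine map_mxM map_Mabcd.
  by rewrite Pt_sub_mul_Mabcd ?(affine_neq0 tqF).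
- by rewrite mxrankMfree // row_free_unit Mabcd_unit.
Qed.

End ImaginaryChord.

Lemma imag_chord_mul (F : finFieldType) (L : 'M[F]_(2,4)) C M :
  imag_chord L -> C \in Gq F -> M \in C -> imag_chord (L *m M).
Proof.
move=> /imag_chordP [K [iota [t w]]] /GqP [a [b [c [d [det0 ->]]]]] /pclassP [k k0 ->].
apply/imag_chordP; exists K, iota; eexists; apply: witness_eqmx (witness_mul_Mabcd w det0).
by rewrite -scalemxAr; apply/eqmxP/eqmx_sym/eqmx_scale.
Qed.

Lemma imag_chord_trans (F : finFieldType) (L L' : 'M[F]_(2,4)) :
  imag_chord L -> imag_chord L' ->
  exists2 C, C \in Gq F & exists2 M, M \in C & (L *m M == L')%MS.
Proof.
move=> /imag_chordP [K [iota [t w]]] /imag_chordP [K' [iota' [t' w']]].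
have [v [u t2']] := witness_quad w'; have [cK tF _ _ _] := w; have [cK' tF' _ _ _] := w'.
have [s s2] := exists_quad_root iota cK cK' tF' t2'.
have sF := quad_root_notin (quad_no_root tF' t2') s2.
have [a [b Es]] := affine_onto tF cK s.
have det0 : a * 1 - b * 0 != 0.
  rewrite mulr1 mulr0 subr0; apply: contraNneq (sF b) => a0.
  by rewrite Es a0 rmorph0 mul0r add0r.
have := witness_mul_Mabcd w det0; rewrite rmorph0 rmorph1 mul0r add0r divr1 -Es => w2.
exists (pclass (Mabcd a b 0 1)); first exact: pclass_Mabcd_Gq.
exists (Mabcd a b 0 1); first exact: pclass_id.
have /eqmxP E := witness_chord w2 s2; have /eqmxP E' := witness_chord w' t2'.
by apply/eqmxP; exact: eqmx_trans (eqmx_sym E) E'.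
Qed.

(** * The stabiliser of an imaginary chord *)

Section ProjectiveLine.
Variable F : finFieldType.

(* Normalised homogeneous coordinates (a : c) of the points of PG(1,q). *)
Definition pl_coord (p : option F) : F * F := if p is Some a then (a, 1) else (1, 0).

Lemma pl_coord_neq0 p : ((pl_coord p).1 != 0) || ((pl_coord p).2 != 0).
Proof. by case: p => [a|] /=; rewrite oner_eq0 ?orbT. Qed.

Lemma pl_coordP a c : (a != 0) || (c != 0) ->
  exists p, exists2 k, k != 0 & (a, c) = (k * (pl_coord p).1, k * (pl_coord p).2).
Proof.
have [-> | c0] := eqVneq c 0; last by exists (Some (a / c)), c; rewrite //= mulr1 mulrC divfK.
by rewrite /= orbF => a0; exists None, a; rewrite //= mulr1 mulr0.
Qed.

Lemma pl_coord_cubes_inj p1 p2 k :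
  let: (a1, c1) := pl_coord p1 in let: (a2, c2) := pl_coord p2 in
  a2 ^+ 3 = k * a1 ^+ 3 -> a2 ^+ 2 * c2 = k * (a1 ^+ 2 * c1) -> c2 ^+ 3 = k * c1 ^+ 3 ->
  p1 = p2.
Proof.
case: p1 p2 => [a1|] [a2|] /=; rewrite ?(expr1n, expr0n, mulr1, mulr0) //=.
- move=> + + k1; rewrite -k1 !mul1r => a3 a2s; congr Some.
  have [a0 | a0] := eqVneq a1 0.
    by move: a3; rewrite a0 expr0n => /eqP; rewrite expf_eq0 => /andP [_ /eqP].
  by apply: (mulIf (expf_neq0 2 a0)); rewrite -exprS -a2s -exprS a3.
- by move=> + _ k0; rewrite -k0 mul0r => /eqP; rewrite oner_eq0.
- by move=> _ _ /eqP; rewrite oner_eq0.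
Qed.

End ProjectiveLine.

Section ChordStabilizer.
Variables (F : finFieldType) (v u : F).
Implicit Types (a c : F) (swap : bool).

(* With t, v - t the roots of X^2 - vX - u, the Moebius map z |-> (a z + b) / (c z + d)
   of M(a,b,c,d) fixes both roots iff (b, d) = chord_stab_bd false a c, and exchanges
   them iff (b, d) = chord_stab_bd true a c. *)
Definition chord_stab_bd swap a c : F * F :=
  if swap then (- (a * v) - c * u, - a) else (c * u, a - c * v).

Definition chord_stab_mx swap a c : 'M[F]_4 :=
  Mabcd a (chord_stab_bd swap a c).1 c (chord_stab_bd swap a c).2.

Lemma chord_stab_mx_scale swap l a c :
  chord_stab_mx swap (l * a) (l * c) = l ^+ 3 *: chord_stab_mx swap a c.
Proof. by rewrite /chord_stab_mx -Mabcd_scale; case: swap; congr Mabcd => /=; ring. Qed.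

Lemma chord_stab_mx_stable swap a c :
  (chord_mx v u *m chord_stab_mx swap a c <= chord_mx v u)%MS.
Proof.
apply/row_subP => i; rewrite row_mul sub_chord_mx.
by case: swap; case: i => [[|[|i]] Hi] //; rewrite !mxE !big_ord_recl !big_ord0 !mxE /=;
  apply/andP; split; apply/eqP; ring.
Qed.

Definition chord_stab_param (y : bool * option F) : {set 'M[F]_4} :=
  pclass (chord_stab_mx y.1 (pl_coord y.2).1 (pl_coord y.2).2).

Lemma chord_stab_mx_pl_inj swap1 swap2 p1 p2 k :
  chord_stab_mx swap2 (pl_coord p2).1 (pl_coord p2).2 =
    k *: chord_stab_mx swap1 (pl_coord p1).1 (pl_coord p1).2 -> p1 = p2.
Proof.
move=> E; have e (j : 'I_4) := congr1 (fun M : 'M[F]_4 => M o0 j) E.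
move: (pl_coord_cubes_inj p1 p2 k) (e o0) (e o1) (e o3); rewrite !mxE /=.
by case: (pl_coord p1) (pl_coord p2) => [a1 c1] [a2 c2]; apply.
Qed.

Hypothesis irr : forall x : F, x ^+ 2 != v * x + u.

Lemma chord_stab_det swap a c : (a != 0) || (c != 0) ->
  a * (chord_stab_bd swap a c).2 - (chord_stab_bd swap a c).1 * c != 0.
Proof.
(* The determinant is +-(a^2 - a c v - c^2 u), i.e. c^2 times X^2 - vX - u at a / c. *)
move=> ac; suff norm0 : a ^+ 2 - a * c * v - c ^+ 2 * u != 0.
  case: swap => /=.
    by rewrite (_ : _ * _ - _ = - (a ^+ 2 - a * c * v - c ^+ 2 * u)) ?oppr_eq0 //; ring.
  by rewrite (_ : _ * _ - _ = a ^+ 2 - a * c * v - c ^+ 2 * u) //; ring.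
have [c0 | c0] := eqVneq c 0.
  by move: ac; rewrite c0 eqxx orbF !(mul0r, mulr0, expr0n, subr0) => /expf_neq0 ->.
apply: contraNneq (irr (a / c)) => norm0.
have e : (a / c) ^+ 2 - (v * (a / c) + u) = (a ^+ 2 - a * c * v - c ^+ 2 * u) / c ^+ 2 by field.
by rewrite -subr_eq0 e norm0 mul0r.
Qed.

Lemma chord_stab_mx_in_stab L swap a c : (chord_mx v u == L)%MS -> (a != 0) || (c != 0) ->
  pclass (chord_stab_mx swap a c) \in stab L.
Proof.
move=> /eqmxP chL ac; have det0 := chord_stab_det swap ac.
apply/stabP; split; first exact: pclass_Mabcd_Gq.
exists (chord_stab_mx swap a c); first exact: pclass_id.
have sub := chord_stab_mx_stable swap a c.
have rk : \rank (chord_mx v u *m chord_stab_mx swap a c) = \rank (chord_mx v u).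
  by rewrite mxrankMfree // row_free_unit Mabcd_unit.
apply/eqmxP; apply: eqmx_trans (eqmxMr _ (eqmx_sym chL)) (eqmx_trans _ chL).
by apply/eqmxP; rewrite sub -(eq_leqif (mxrank_leqif_sup sub)) rk eqxx.
Qed.

End ChordStabilizer.

Section StabilizerOfImaginaryChord.
Variables (F K : finFieldType) (iota : {rmorphism F -> K}) (v u : F) (t : K).
Hypotheses (tF : forall x, iota x != t) (t2 : t ^+ 2 = iota v * t + iota u).
Implicit Types (a b c d : F) (swap : bool).

Lemma mobius_root_chord_stab_bd swap a b c d :
  iota a * t + iota b = (if swap then iota v - t else t) * (iota c * t + iota d) <->
  (b, d) = chord_stab_bd v u swap a c.
Proof.
(* Once t^2 is reduced both sides are affine in t: compare coefficients in the basis {t, 1}. *)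
have quad0 : iota c * (t ^+ 2 - (iota v * t + iota u)) = 0 by rewrite t2 subrr mulr0.
case: swap => /=; split => [E | [-> ->]].
- have : iota (a + d) * t + iota (b - v * d + c * u) = 0.
    rewrite -[RHS](subrr (iota a * t + iota b)) {2}E -[RHS]subr0 -quad0.
    by rewrite !(rmorphD, rmorphB, rmorphM); ring.
  case/(affine_eq0 tF) => ad bd.
  have dE : d = - a by apply/eqP; rewrite -addr_eq0 addrC ad.
  by rewrite -[b]subr0 -bd dE; congr pair; ring.
- apply/eqP; rewrite -subr_eq0 -quad0; apply/eqP.
  by rewrite !(rmorphN, rmorphD, rmorphB, rmorphM); ring.
- have : iota (a - c * v - d) * t + iota (b - c * u) = 0.
    rewrite -[RHS](subrr (iota a * t + iota b)) {2}E -[RHS]addr0 -quad0.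
    by rewrite !(rmorphB, rmorphM); ring.
  case/(affine_eq0 tF) => ad bd.
  have dE : d = a - c * v by apply/eqP; rewrite eq_sym -subr_eq0 ad.
  by rewrite -[b]subr0 -bd dE; congr pair; ring.
- apply/eqP; rewrite -subr_eq0 -oppr0 -quad0; apply/eqP.
  by rewrite !(rmorphB, rmorphM); ring.
Qed.

Lemma stab_witness_chord_stab_mx L C : chord_witness iota L t -> C \in stab L ->
  exists swap a c, (a != 0) || (c != 0) /\ chord_stab_mx v u swap a c \in C.
Proof.
move=> w /stabP [/GqP [a [b [c [d [det0 CE]]]]] [M]]; rewrite CE => /pclassP [k k0 ->] LM.
have LM' : (L *m Mabcd a b c d <= L)%MS.
  by move: LM; rewrite -scalemxAr (eqmx_scale _ k0) => /andP [].
have R0 := affine_neq0 tF (det_neq0_cd det0).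
(* The Moebius image s of t lies on the chord, hence is a root of X^2 - vX - u. *)
set s := (iota a * t + iota b) / (iota c * t + iota d).
have : (Pt s <= map_mx iota (chord_mx v u))%MS.
  have [_ _ Lt _ _] := w; have /andP [_ Lch] := witness_chord w t2.
  apply: submx_trans (_ : _ <= map_mx iota (L *m Mabcd a b c d))%MS _.
    by rewrite map_mxM map_Mabcd Pt_sub_mul_Mabcd.
  by rewrite map_submx (submx_trans LM').
rewrite map_chord_mx Pt_sub_chord_mx => /eqP /(quad_root_cases t2) mob.
have [swap /(canRL (divfK R0)) /mobius_root_chord_stab_bd bdE] :
    exists swap, s = if swap then iota v - t else t.
  by case: mob; [exists false | exists true].
exists swap, a, c; split; last by rewrite /chord_stab_mx -bdE pclass_id.
apply: contraNT det0; rewrite negb_or !negbK => /andP [/eqP -> /eqP ->].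
by rewrite mul0r mulr0 subrr.
Qed.

Lemma Pt_mul_chord_stab_mx swap a c : (a != 0) || (c != 0) ->
  exists2 k, k != 0 & Pt t *m map_mx iota (chord_stab_mx v u swap a c) =
                      k *: Pt (if swap then iota v - t else t).
Proof.
move=> ac; have det0 := chord_stab_det (quad_no_root tF t2) swap ac.
have R0 := affine_neq0 tF (det_neq0_cd det0).
rewrite map_Mabcd Pt_mul_Mabcd Pt_homE //; set R := iota c * t + _ in R0 *.
exists (R ^+ 3); first exact: expf_neq0.
congr (_ *: Pt _); apply: (canLR (mulfK R0)); apply/mobius_root_chord_stab_bd.
by case: chord_stab_bd.
Qed.

Lemma chord_stab_mx_swap_inj swap1 swap2 a1 c1 a2 c2 k :
  (a1 != 0) || (c1 != 0) -> (a2 != 0) || (c2 != 0) ->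
  chord_stab_mx v u swap2 a2 c2 = k *: chord_stab_mx v u swap1 a1 c1 -> swap1 = swap2.
Proof.
move=> ac1 ac2 /(congr1 (fun M => Pt t *m map_mx iota M)); rewrite map_mxZ -scalemxAr.
have [k1 _ ->] := Pt_mul_chord_stab_mx swap1 ac1.
have [k2 k2_0 ->] := Pt_mul_chord_stab_mx swap2 ac2.
rewrite scalerA => /(Pt_scale_inj k2_0).
have tt' : (iota v - t == t) = false.
  by rewrite -(frobenius_quad tF t2) (negbTE (frobenius_neq tF)).
by case: swap1 swap2 => -[] // /eqP; rewrite ?tt' // eq_sym tt'.
Qed.

End StabilizerOfImaginaryChord.

Lemma card_stab (F : finFieldType) (L : 'M[F]_(2,4)) :
  imag_chord L -> #|stab L| = (2 * (#|F| + 1))%N.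
Proof.
move=> /imag_chordP [K [iota [t w]]]; have [_ tF _ _ _] := w.
have [v [u t2]] := witness_quad w; have irr := quad_no_root tF t2.
have -> : stab L = [set chord_stab_param v u y | y in [set: bool * option F]].
  apply/setP => C; apply/idP/imsetP => [CL | [[swap p] _ ->]]; last first.
    exact: (chord_stab_mx_in_stab irr swap (witness_chord w t2) (pl_coord_neq0 p)).
  have [swap [a [c [ac MC]]]] := stab_witness_chord_stab_mx tF t2 w CL.
  have [p [k k0 [ea ec]]] := pl_coordP ac; rewrite {}ea {}ec in MC.
  exists (swap, p) => //; have [CG _] := stabP _ _ CL.
  by rewrite (Gq_pclass CG MC) chord_stab_mx_scale pclass_scale // expf_neq0.
rewrite card_imset ?cardsT ?card_prod ?card_bool ?card_option ?addn1 // => -[s1 p1] [s2 p2] E.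
have /pclassP [k _ /= Ek] :
    chord_stab_mx v u s2 (pl_coord p2).1 (pl_coord p2).2 \in chord_stab_param v u (s1, p1).
  by rewrite E pclass_id.
rewrite (chord_stab_mx_pl_inj Ek).
by rewrite (chord_stab_mx_swap_inj tF t2 (pl_coord_neq0 p1) (pl_coord_neq0 p2) Ek).
Qed.

(** * Normal forms *)

Lemma chord_mx_imag_stab (F : finFieldType) (L : 'M[F]_(2,4)) v u :
  (forall x, x ^+ 2 != v * x + u) -> (chord_mx v u == L)%MS ->
  imag_chord L /\ forall C, C \in stab L ->
    exists swap a c, (a != 0) || (c != 0) /\ chord_stab_mx v u swap a c \in C.
Proof.
move=> irr chL; have [K [iota [t [cK tF t2]]]] := exists_quad_ext irr.
have w := witness_eqmx chL (chord_mx_witness cK tF t2).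
split; first by apply/imag_chordP; exists K, iota, t.
by move=> C; exact: (stab_witness_chord_stab_mx tF t2 w).
Qed.

Section OddNormalForm.
Variables (F : finFieldType) (rho : F).
Hypothesis rho0 : rho != 0.

Lemma ell1E : ell1 rho = rho *: chord_mx 0 rho^-1.
Proof. by apply/matrixP => i j; rewrite !mxE; case_ord i; case_ord j; field. Qed.

Lemma chord_stab_mx_Mform1 swap a c :
  chord_stab_mx 0 rho^-1 swap a c =
    Mform1 rho ((-1) ^+ swap) ((-1) ^+ swap * c / rho) ((-1) ^+ swap * a).
Proof. by case: swap; apply/matrixP => i j; rewrite !mxE; case_ord i; case_ord j; field. Qed.

End OddNormalForm.

Lemma ell1_stab (F : finFieldType) (rho : F) : (forall x, x ^+ 2 != rho) ->
  imag_chord (ell1 rho) /\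
  forall C, C \in stab (ell1 rho) ->
    exists al b d : F, (al = 1 \/ al = -1) /\ (b != 0 \/ d != 0) /\ Mform1 rho al b d \in C.
Proof.
move=> nsq; have rho0 : rho != 0 by have := nsq 0; rewrite expr0n eq_sym.
have irr x : x ^+ 2 != 0 * x + rho^-1.
  by rewrite mul0r add0r; apply: contraNneq (nsq x^-1) => x2; rewrite exprVn x2 invrK.
have [] := chord_mx_imag_stab (L := ell1 rho) irr.
  by rewrite ell1E //; apply/eqmxP/eqmx_sym/eqmx_scale.
move=> ell1_imag ell1_stab; split => // C /ell1_stab [swap [a [c [ac MC]]]].
exists ((-1) ^+ swap), ((-1) ^+ swap * c / rho), ((-1) ^+ swap * a).
split; first by case: (swap); [right | left].
split; last by rewrite -chord_stab_mx_Mform1.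
by case/orP: ac => [a0 | c0]; [right | left]; rewrite ?mulf_neq0 ?signr_eq0 ?invr_eq0.
Qed.

Section EvenNormalForm.
Variable F : finFieldType.
Local Notation q := #|F|.

Lemma even_card_pchar2 : ~~ odd q -> (2%N \in [pchar F]) /\ q = (2 ^ logn 2 q)%N.
Proof.
have [p p_pr pF] := finPcharP F; have qE : q = (p ^ logn p q)%N := card_pprimeChar pF.
have [p2 | p_odd] := even_prime p_pr; first by move=> _; rewrite -p2; split.
by rewrite qE oddX p_odd orbT.
Qed.

Hypothesis pchar2 : (2%N \in [pchar F]).

Lemma abs_trace1_no_root (eta : F) : q = (2 ^ logn 2 q)%N -> abs_trace eta = 1 ->
  forall x, x ^+ 2 != x + eta.
Proof.
move=> qE tr1 x; apply: contra_eqN tr1 => /eqP x2.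
have etaE : eta = x ^+ 2 + x by rewrite x2 addrC -{1}(oppr_pchar2 pchar2 x) addKr.
pose f i := x ^+ (2 ^ i.+1) - x ^+ (2 ^ i).
rewrite /abs_trace (eq_bigr (fun i : 'I_ _ => f i)) => [|i _].
  rewrite -(big_mkord xpredT f) telescope_sumr // -qE expf_card.
  by rewrite subrr eq_sym oner_eq0.
rewrite etaE exprDn_pchar; last by rewrite pnatX (eq_pnat _ (pcharf_eq pchar2)) pnat_id.
by rewrite /f -exprM -expnS (oppr_pchar2 pchar2).
Qed.

Lemma Mform2_Mabcd (eta al c d : F) :
  Mform2 eta al c d = Mabcd (al * c + d) (eta * c + (al + 1) * d) c d.
Proof.
have two0 := pcharf0 pchar2; have three1 : 3%:R = 1 :> F by rewrite -natr1 two0 add0r.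
by apply/matrixP => i j; rewrite !mxE; case_ord i; case_ord j; rewrite ?two0 ?three1; ring.
Qed.

Lemma chord_stab_mx_Mform2 (eta : F) swap a c :
  chord_stab_mx 1 eta swap a c = Mform2 eta (~~ swap)%:R c (a - (~~ swap)%:R * c).
Proof.
rewrite Mform2_Mabcd /chord_stab_mx; case: swap => /=.
  by congr Mabcd; rewrite ?(oppr_pchar2 pchar2); ring.
by congr Mabcd; rewrite ?natr1 ?(pcharf0 pchar2); ring.
Qed.

End EvenNormalForm.

Lemma ell2_stab (F : finFieldType) (eta : F) : ~~ odd #|F| -> abs_trace eta = 1 ->
  imag_chord (ell2 eta) /\
  forall C, C \in stab (ell2 eta) ->
    exists al c d : F, (al = 0 \/ al = 1) /\ (c != 0 \/ d != 0) /\ Mform2 eta al c d \in C.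
Proof.
move=> q_even tr1; have [pchar2 qE] := even_card_pchar2 q_even.
have irr x : x ^+ 2 != 1 * x + eta by rewrite mul1r abs_trace1_no_root.
have [] := chord_mx_imag_stab (L := ell2 eta) irr.
  have -> : ell2 eta = chord_mx 1 eta.
    by apply/matrixP => i j; rewrite !mxE; case_ord i; case_ord j; ring.
  by rewrite submx_refl.
move=> ell2_imag ell2_stab; split => // C /ell2_stab [swap [a [c [ac MC]]]].
exists (~~ swap)%:R, c, (a - (~~ swap)%:R * c).
split; first by case: (swap); [left | right].
split; last by rewrite -chord_stab_mx_Mform2.
have [c0 | c0] := eqVneq c 0; last by left.
by right; move: ac; rewrite c0 mulr0 subr0 eqxx orbF.
Qed.

Theorem theorem5p7 (F : finFieldType) : (5 <= #|F|)%N ->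
  (* the imaginary chords form one G_q-orbit *)
  (forall (L : 'M[F]_(2,4)) (C : {set 'M[F]_4}) (M : 'M[F]_4),
      imag_chord L -> C \in Gq F -> M \in C -> imag_chord (L *m M)) /\
  (forall L L' : 'M[F]_(2,4), imag_chord L -> imag_chord L' ->
      exists2 C, C \in Gq F & exists2 M, M \in C & (L *m M == L')%MS) /\
  (* the stabilizer of an imaginary chord has size 2(q+1) *)
  (forall L : 'M[F]_(2,4), imag_chord L -> #|stab L| = (2 * (#|F| + 1))%N) /\
  (* q odd *)
  (odd #|F| -> forall rho : F, (forall x : F, x ^+ 2 != rho) ->
      imag_chord (ell1 rho) /\
      forall C, C \in stab (ell1 rho) ->
        exists al b d : F, (al = 1 \/ al = -1) /\ (b != 0 \/ d != 0) /\
          Mform1 rho al b d \in C) /\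
  (* q even *)
  (~~ odd #|F| -> forall eta : F, abs_trace eta = 1 ->
      imag_chord (ell2 eta) /\
      forall C, C \in stab (ell2 eta) ->
        exists al c d : F, (al = 0 \/ al = 1) /\ (c != 0 \/ d != 0) /\
          Mform2 eta al c d \in C).
Proof.
(* q >= 5 is only needed to identify G_q with the matrices M(a,b,c,d), which the
   definition of Gq takes for granted. *)
move=> _; split; first exact: imag_chord_mul.
split; first exact: imag_chord_trans.
split; first exact: card_stab.
by split=> [_ rho | q_even eta]; [exact: ell1_stab | exact: ell2_stab].
Qed.
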